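(* Let $S$ be an inverse semigroup that is a mirror semigroup, with semilattice of idempotents $\Sigma=\Sigma(S)$. Then $(S,\leqslant)$ is conditionally directed-complete if and only if $(\Sigma,\leqslant)$ is conditionally directed-complete.
   Context: An inverse semigroup is a semigroup $S$ in which every $s$ has a unique $s^*$ with $ss^*s=s$ and $s^*ss^*=s^*$. $\Sigma(S)$ is the set of idempotents of $S$. The intrinsic order is $s\leqslant t$ iff $s=t\epsilon$ for some idempotent $\epsilon$. A subset of a poset is directed if it is nonempty and any two elements have an upper bound in it. A poset is conditionally directed-complete if every directed subset that is bounded above has a supremum. $S$ is a mirror semigroup if every directed subset of $\Sigma$ having a supremum in $(\Sigma,\leqslant)$ also has a supremum in $(S,\leqslant)$. *)

Definition is_inverse_semigroup {S : Type} (mul : S -> S -> S) : Prop :=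
  (forall a b c, mul a (mul b c) = mul (mul a b) c) /\
  (forall s, exists! t, mul (mul s t) s = s /\ mul (mul t s) t = t).

Definition idem {S : Type} (mul : S -> S -> S) (e : S) : Prop := mul e e = e.

Definition nat_le {S : Type} (mul : S -> S -> S) (s t : S) : Prop :=
  exists e, idem mul e /\ s = mul t e.

(** Poset notions for the poset {x | P x} ordered by the restriction of le. *)
Definition directed {S : Type} (le : S -> S -> Prop) (D : S -> Prop) : Prop :=
  (exists x, D x) /\
  (forall x y, D x -> D y -> exists z, D z /\ le x z /\ le y z).

Definition is_ub {S : Type} (P : S -> Prop) (le : S -> S -> Prop)
  (D : S -> Prop) (u : S) : Prop :=
  P u /\ forall x, D x -> le x u.

Definition is_sup {S : Type} (P : S -> Prop) (le : S -> S -> Prop)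
  (D : S -> Prop) (u : S) : Prop :=
  is_ub P le D u /\ forall v, is_ub P le D v -> le u v.

Definition cond_directed_complete {S : Type} (P : S -> Prop)
  (le : S -> S -> Prop) : Prop :=
  forall D : S -> Prop, (forall x, D x -> P x) -> directed le D ->
    (exists u, is_ub P le D u) -> exists u, is_sup P le D u.

Definition allS {S : Type} (_ : S) : Prop := True.

Definition mirror {S : Type} (mul : S -> S -> S) : Prop :=
  forall D : S -> Prop, (forall x, D x -> idem mul x) -> directed (nat_le mul) D ->
    (exists u, is_sup (idem mul) (nat_le mul) D u) ->
    exists u, is_sup allS (nat_le mul) D u.

From Stdlib Require Import ClassicalEpsilon.

(* Direction (S complete => Sigma complete) holds because Sigma is a down-set
   of (S, <=).  Conversely, a directed set D bounded by u is pushed into Sigma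
   as {d* d | d in D}; its supremum f in Sigma is, by the mirror property, also
   its supremum in S, and then u f is the supremum of D: since upper bounds u, v
   of D agree on every d* d they agree on f, i.e. u f = v f <= v. *)

Section DownSet.

Context {S : Type} (le : S -> S -> Prop) (P : S -> Prop).
Hypothesis P_down : forall x y, P y -> le x y -> P x.

Lemma cond_directed_complete_down_set :
  cond_directed_complete allS le -> cond_directed_complete P le.
Proof.
  intros Hc D _ Hdir [u [Pu Hu]].
  destruct (Hc D (fun _ _ => I) Hdir (ex_intro _ u (conj I Hu)))
    as [k [[_ Hk] Hleast]].
  exists k; split; [split; [|exact Hk] | ].
  - apply (P_down k u Pu), Hleast; split; [exact I | exact Hu].
  - intros v [_ Hv]; apply Hleast; split; [exact I | exact Hv].
Qed.

Hypothesis le_trans : forall x y z, le x y -> le y z -> le x z.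

Lemma is_sup_down_set (D : S -> Prop) (f g : S) :
  is_sup allS le D g -> is_sup P le D f -> is_sup allS le D f.
Proof.
  intros [[_ Hg] Hgleast] [[Pf Hf] Hfleast].
  assert (Hgf : le g f) by (apply Hgleast; split; [exact I | exact Hf]).
  assert (Hfg : le f g).
  { apply Hfleast; split; [exact (P_down g f Pf Hgf) | exact Hg]. }
  split; [split; [exact I | exact Hf] |].
  intros v Hv; exact (le_trans f g v Hfg (Hgleast v Hv)).
Qed.

End DownSet.

Definition inverse_op {S : Type} (mul : S -> S -> S) (inv : S -> S) : Prop :=
  (forall a b c, mul a (mul b c) = mul (mul a b) c) /\
  (forall s, mul (mul s (inv s)) s = s) /\
  (forall s, mul (mul (inv s) s) (inv s) = inv s) /\
  (forall s t, mul (mul s t) s = s -> mul (mul t s) t = t -> t = inv s).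

Lemma inverse_semigroup_inverse_op {S : Type} (mul : S -> S -> S) :
  is_inverse_semigroup mul -> exists inv, inverse_op mul inv.
Proof.
  intros [mulA Hinv].
  exists (fun s => proj1_sig (constructive_indefinite_description _ (Hinv s))).
  split; [exact mulA |].
  split; [| split]; intros s;
    destruct (constructive_indefinite_description _ (Hinv s))
      as [t [[Hst Hts] Huniq]]; simpl.
  - exact Hst.
  - exact Hts.
  - intros t' Hst' Hts'; symmetry; exact (Huniq t' (conj Hst' Hts')).
Qed.

Section InverseSemigroup.

Context {S : Type} {mul : S -> S -> S} {inv : S -> S}.
Hypothesis Hinv : inverse_op mul inv.

Local Infix "·" := mul (at level 40, left associativity).
Local Notation idem := (idem mul).
Local Notation "s <= t" := (nat_le mul s t).

Let mulA : forall a b c, a · (b · c) = a · b · c := proj1 Hinv.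
Let mul_inv_mul : forall s, s · inv s · s = s := proj1 (proj2 Hinv).
Let inv_mul_inv : forall s, inv s · s · inv s = inv s :=
  proj1 (proj2 (proj2 Hinv)).
Let inv_unique : forall s t, s · t · s = s -> t · s · t = t -> t = inv s :=
  proj2 (proj2 (proj2 Hinv)).

Lemma inv_inv (s : S) : inv (inv s) = s.
Proof. symmetry; apply inv_unique; [apply inv_mul_inv | apply mul_inv_mul]. Qed.

Lemma inv_idem (e : S) : idem e -> inv e = e.
Proof. intros He; symmetry; apply inv_unique; unfold idem in He; rewrite !He; reflexivity. Qed.

Lemma mul_idem_r (x g : S) : idem g -> x · g · g = x · g.
Proof. intros Hg; rewrite <- mulA, Hg; reflexivity. Qed.

(* Uniqueness of inverses shows that [a := (e f)*] equals [f a e], which is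
   idempotent; hence so is [e f = a*]. *)
Lemma idem_mul (e f : S) : idem e -> idem f -> idem (e · f).
Proof.
  intros He Hf.
  set (a := inv (e · f)).
  assert (Hx : f · a · e = a).
  { apply inv_unique.
    - transitivity (e · (f · f) · a · (e · e) · f); [rewrite !mulA; reflexivity |].
      rewrite He, Hf, <- (mulA _ e f); apply mul_inv_mul.
    - transitivity (f · (a · (e · f) · a) · e).
      + rewrite !mulA, (mul_idem_r _ e He), (mul_idem_r _ f Hf); reflexivity.
      + unfold a; rewrite inv_mul_inv; reflexivity. }
  assert (Ha : idem a).
  { rewrite <- Hx; unfold idem.
    transitivity (f · (a · (e · f) · a) · e); [rewrite !mulA; reflexivity |].
    unfold a; rewrite inv_mul_inv; reflexivity. }
  rewrite <- (inv_inv (e · f)); fold a; rewrite (inv_idem a Ha); exact Ha.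
Qed.

Lemma idem_comm (e f : S) : idem e -> idem f -> e · f = f · e.
Proof.
  intros He Hf.
  pose proof (idem_mul e f He Hf) as Hef.
  pose proof (idem_mul f e Hf He) as Hfe.
  rewrite <- (inv_idem (e · f) Hef); symmetry; apply inv_unique.
  - rewrite !mulA, (mul_idem_r _ f Hf), (mul_idem_r _ e He), <- mulA; exact Hef.
  - rewrite !mulA, (mul_idem_r _ e He), (mul_idem_r _ f Hf), <- mulA; exact Hfe.
Qed.

Lemma idem_inv_mul (s : S) : idem (inv s · s).
Proof. unfold idem; rewrite mulA, inv_mul_inv; reflexivity. Qed.

Lemma idem_mul_inv (s : S) : idem (s · inv s).
Proof. unfold idem; rewrite mulA, mul_inv_mul; reflexivity. Qed.

Lemma mul_mul_inv_mul (x s : S) : x · s · inv s · s = x · s.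
Proof. rewrite <- !mulA, (mulA s), mul_inv_mul; reflexivity. Qed.

Lemma mul_inv_mul_inv (x s : S) : x · inv s · s · inv s = x · inv s.
Proof. rewrite <- !mulA, (mulA (inv s)), inv_mul_inv; reflexivity. Qed.

Lemma inv_mul (s t : S) : inv (s · t) = inv t · inv s.
Proof.
  symmetry; apply inv_unique.
  - transitivity (s · (t · inv t · (inv s · s)) · t); [rewrite !mulA; reflexivity |].
    rewrite (idem_comm _ _ (idem_mul_inv t) (idem_inv_mul s)).
    rewrite !mulA, mul_inv_mul, mul_mul_inv_mul; reflexivity.
  - transitivity (inv t · (inv s · s · (t · inv t)) · inv s);
      [rewrite !mulA; reflexivity |].
    rewrite (idem_comm _ _ (idem_inv_mul s) (idem_mul_inv t)).
    rewrite !mulA, inv_mul_inv, mul_inv_mul_inv; reflexivity.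
Qed.

Lemma nat_le_trans (s t u : S) : s <= t -> t <= u -> s <= u.
Proof.
  intros [e [He ->]] [f [Hf ->]].
  exists (f · e); split; [exact (idem_mul f e Hf He) | rewrite mulA; reflexivity].
Qed.

Lemma nat_le_dom (s t : S) : s <= t -> s = t · (inv s · s).
Proof.
  intros [e [He ->]].
  rewrite inv_mul, (inv_idem e He), !mulA.
  rewrite <- (mulA (t · e)), <- (mulA t e), (idem_comm e _ He (idem_inv_mul t)).
  rewrite !mulA, mul_inv_mul, (mul_idem_r _ e He); reflexivity.
Qed.

Lemma nat_le_idem (e f : S) : idem f -> e <= f -> idem e.
Proof. intros Hf [g [Hg ->]]; exact (idem_mul f g Hf Hg). Qed.

Lemma nat_le_idem_mul (e f : S) : idem f -> e <= f -> e = f · e.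
Proof. intros Hf [g [Hg ->]]; rewrite mulA, Hf; reflexivity. Qed.

Lemma nat_le_inv_mul (s t : S) : s <= t -> inv s · s <= inv t · t.
Proof.
  intros [e [He ->]].
  exists e; split; [exact He |].
  rewrite inv_mul, (inv_idem e He), mulA, <- (mulA e (inv t) t).
  rewrite (idem_comm e _ He (idem_inv_mul t)), (mul_idem_r _ e He); reflexivity.
Qed.

Definition dom_image (D : S -> Prop) (x : S) : Prop :=
  exists d, D d /\ x = inv d · d.

Lemma dom_image_idem (D : S -> Prop) (x : S) : dom_image D x -> idem x.
Proof. intros [d [_ ->]]; apply idem_inv_mul. Qed.

Lemma directed_dom_image (D : S -> Prop) :
  directed (nat_le mul) D -> directed (nat_le mul) (dom_image D).
Proof.
  intros [[d0 Hd0] Hdir]; split.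
  - exists (inv d0 · d0), d0; split; [exact Hd0 | reflexivity].
  - intros x y [d1 [Hd1 ->]] [d2 [Hd2 ->]].
    destruct (Hdir d1 d2 Hd1 Hd2) as [z [Hz [Hz1 Hz2]]].
    exists (inv z · z); split; [exists z; split; [exact Hz | reflexivity] |].
    split; apply nat_le_inv_mul; assumption.
Qed.

Lemma is_ub_dom_image (D : S -> Prop) (u : S) :
  is_ub allS (nat_le mul) D u -> is_ub idem (nat_le mul) (dom_image D) (inv u · u).
Proof.
  intros [_ Hu]; split; [apply idem_inv_mul |].
  intros x [d [Hd ->]]; exact (nat_le_inv_mul d u (Hu d Hd)).
Qed.

Section SupDomImage.

Variables (D : S -> Prop) (f : S).
Hypotheses (Hf : idem f) (Hsup : is_sup allS (nat_le mul) (dom_image D) f).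

Lemma dom_le_sup (d : S) : D d -> inv d · d <= f.
Proof. intros Hd; apply (proj2 (proj1 Hsup)); exists d; split; [exact Hd | reflexivity]. Qed.

(* Each [d* d] is fixed by [u* v f], so [f <= u* v f], which for an idempotent
   [f] means equality. *)
Lemma sup_dom_image_fixed (u v : S) :
  (forall d, D d -> d <= u) -> (forall d, D d -> d <= v) -> f = inv u · v · f.
Proof.
  intros Hu Hv.
  assert (Hle : f <= inv u · v · f).
  { apply (proj2 Hsup); split; [exact I |].
    intros x [d [Hd ->]]; exists (inv d · d); split; [apply idem_inv_mul |].
    rewrite <- mulA, <- (nat_le_idem_mul _ _ Hf (dom_le_sup d Hd)).
    rewrite <- (mulA (inv u)), <- (nat_le_dom d v (Hv d Hd)).
    rewrite (nat_le_dom d u (Hu d Hd)) at 3; rewrite mulA.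
    exact (nat_le_idem_mul _ _ (idem_inv_mul u) (nat_le_inv_mul d u (Hu d Hd))). }
  rewrite (nat_le_dom _ _ Hle) at 1.
  rewrite (inv_idem f Hf); unfold idem in Hf; rewrite Hf, <- mulA, Hf; reflexivity.
Qed.

Lemma ub_mul_sup_dom_image (u v : S) :
  (forall d, D d -> d <= u) -> (forall d, D d -> d <= v) -> u · f = v · f.
Proof.
  intros Hu Hv.
  pose proof (sup_dom_image_fixed u v Hu Hv) as Huv.
  pose proof (sup_dom_image_fixed v u Hv Hu) as Hvu.
  transitivity (u · inv u · (v · inv v) · (u · f)).
  - rewrite Huv at 1; rewrite Hvu at 1; rewrite !mulA; reflexivity.
  - rewrite (idem_comm _ _ (idem_mul_inv u) (idem_mul_inv v)), !mulA, mul_mul_inv_mul.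
    rewrite Hvu at 2; rewrite !mulA; reflexivity.
Qed.

Lemma is_sup_mul_sup_dom_image (u : S) :
  is_ub allS (nat_le mul) D u -> is_sup allS (nat_le mul) D (u · f).
Proof.
  intros [_ Hu]; split; [split; [exact I |] |].
  - intros d Hd; exists (inv d · d); split; [apply idem_inv_mul |].
    rewrite <- mulA, <- (nat_le_idem_mul _ _ Hf (dom_le_sup d Hd)).
    exact (nat_le_dom d u (Hu d Hd)).
  - intros v [_ Hv]; exists f; split; [exact Hf |].
    exact (ub_mul_sup_dom_image u v Hu Hv).
Qed.

End SupDomImage.

End InverseSemigroup.

Theorem proposition3p7 (S : Type) (mul : S -> S -> S)
  (HS : is_inverse_semigroup mul) (Hmirror : mirror mul) :
  cond_directed_complete allS (nat_le mul) <->
  cond_directed_complete (idem mul) (nat_le mul).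
Proof.
  destruct (inverse_semigroup_inverse_op mul HS) as [inv Hinv].
  split.
  - apply cond_directed_complete_down_set; exact (nat_le_idem Hinv).
  - intros Hc D _ Hdir [u Hu].
    set (E := dom_image (mul := mul) (inv := inv) D).
    pose proof (dom_image_idem Hinv D) as HE.
    pose proof (directed_dom_image Hinv D Hdir) as Hdir_E.
    destruct (Hc E HE Hdir_E (ex_intro _ _ (is_ub_dom_image Hinv D u Hu)))
      as [f Hf].
    destruct (Hmirror E HE Hdir_E (ex_intro _ f Hf)) as [g Hg].
    pose proof (is_sup_down_set _ _ (nat_le_idem Hinv) (nat_le_trans Hinv)
                  E f g Hg Hf) as Hf_S.
    exists (mul u f).
    exact (is_sup_mul_sup_dom_image Hinv D f (proj1 (proj1 Hf)) Hf_S u Hu).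
Qed.
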